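(* Let $G$ be a 3-symmetric graph on 16 vertices. Then the clique number $\omega(G)$ satisfies $3\le \omega(G)\le 8$, and the maximum degree of $G$ is at least $8$.
   Context: All graphs are finite and simple. For a graph $G$ on $n$ vertices and a graph $F$ on $k$ vertices, the density $t(F,G)$ is the number of $k$-element subsets $S\subseteq V(G)$ whose induced subgraph is isomorphic to $F$, divided by $\binom{n}{k}$. A graph $G$ with at least 3 vertices is 3-symmetric if $t(K_3,G)=1/8$, $t(P_3,G)=3/8$, $t(K_2\cup K_1,G)=3/8$ and $t(\overline{K_3},G)=1/8$, where $K_3$ is the triangle, $P_3$ the path with 3 vertices and 2 edges, $K_2\cup K_1$ the 3-vertex graph with exactly one edge, and $\overline{K_3}$ the 3-vertex graph with no edges. *)

From HB Require Import structures.
From mathcomp Require Import all_boot all_order all_algebra.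
Set Implicit Arguments. Unset Strict Implicit. Unset Printing Implicit Defensive.

Definition simple_graph (T : finType) (e : rel T) : Prop :=
  symmetric e /\ irreflexive e.

Definition induced_edges (T : finType) (e : rel T) (S : {set T}) : nat :=
  #|[set P : {set T} | (P \subset S) && (#|P| == 2) &&
       [exists x, exists y, (P == [set x; y]) && e x y]]|.

(* number of k-vertex subsets inducing a 3-vertex graph with exactly m edges;
   a 3-vertex simple graph is determined up to isomorphism by its edge count:
   0 edges = complement of K3, 1 = K2 u K1, 2 = P3, 3 = K3. *)
Definition count3 (T : finType) (e : rel T) (m : nat) : nat :=
  #|[set S : {set T} | (#|S| == 3) && (induced_edges e S == m)]|.

Definition t3 (T : finType) (e : rel T) (m : nat) : rat :=
  ((count3 e m)%:R / ('C(#|T|, 3))%:R)%R.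

Definition three_symmetric (T : finType) (e : rel T) : Prop :=
  (3 <= #|T|)%N /\
  t3 e 3 = (1 / 8)%R /\ t3 e 2 = (3 / 8)%R /\ t3 e 1 = (3 / 8)%R /\ t3 e 0 = (1 / 8)%R.

Definition clique_number (T : finType) (e : rel T) : nat :=
  \max_(S : {set T} | [forall x in S, forall y in S, (x != y) ==> e x y]) #|S|.

Definition degree (T : finType) (e : rel T) (x : T) : nat := #|[set y | e x y]|.

Definition max_degree (T : finType) (e : rel T) : nat := \max_(x : T) degree e x.

(* Triangles and edges are tied together by double counting: an edge lies in
   n - 2 three-vertex sets, so 14 |E| = 1·210 + 2·210 + 3·70 = 840 and G has
   60 edges, hence average degree 7.5 and a vertex of degree at least 8.
   G has 70 > 0 triangles, so omega >= 3, while a 9-clique alone would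
   contain 'C(9, 3) = 84 > 70 triangles, so omega <= 8. *)

From HB Require Import structures.
From mathcomp Require Import all_boot all_order all_algebra.
From mathcomp Require Import lra zify.

Set Implicit Arguments.
Unset Strict Implicit.
Unset Printing Implicit Defensive.

Import GRing.Theory Num.Theory.

Lemma sum_card_rel (I J : finType) (A : {pred I}) (B : {pred J})
    (R : I -> J -> bool) :
  \sum_(i in A) #|[set j in B | R i j]| = \sum_(j in B) #|[set i in A | R i j]|.
Proof.
under eq_bigr => i _ do rewrite -sum1dep_card.
rewrite (exchange_big_dep (mem B)) /=; last by move=> i j _ /andP[].
by apply: eq_bigr => j jB; rewrite -sum1dep_card; apply: eq_bigl => i; rewrite jB.
Qed.

Lemma card_supersets_add1 (T : finType) (k : nat) (P : {set T}) : #|P| = k ->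
  #|[set S : {set T} | #|S| == k.+1 & P \subset S]| = #|T| - k.
Proof.
move=> cardP.
have -> : [set S : {set T} | #|S| == k.+1 & P \subset S] = [set x |: P | x in ~: P].
  apply/setP => S; rewrite inE; apply/idP/imsetP.
    move=> /andP[/eqP cardS PS].
    have /cards1P[x SDP] : #|S :\: P| == 1.
      by rewrite cardsD (setIidPr PS) cardS cardP subSnn.
    have : x \in S :\: P by rewrite SDP set11.
    rewrite !inE => /andP[xP _]; exists x; first by rewrite inE.
    by rewrite -{1}(setID S P) (setIidPr PS) SDP setUC.
  by case=> x; rewrite inE => xP ->; rewrite cardsU1 xP cardP subsetUr add1n eqxx.
rewrite card_in_imset; first by rewrite cardsCs setCK cardP.
move=> x y; rewrite !inE => xP yP xPyP.
have : x \in y |: P by rewrite -xPyP setU11.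
by rewrite in_setU1 (negbTE xP) orbF => /eqP.
Qed.

Section Graph.

Variables (T : finType) (e : rel T).

Definition is_edge (P : {set T}) : bool :=
  [exists x, exists y, (P == [set x; y]) && e x y].

Definition edges : {set {set T}} := [set P : {set T} | (#|P| == 2) && is_edge P].

Lemma in_edges (P : {set T}) : (P \in edges) = (#|P| == 2) && is_edge P.
Proof. by rewrite inE. Qed.

Definition is_clique (S : {set T}) : bool :=
  [forall x in S, forall y in S, (x != y) ==> e x y].

Lemma induced_edgesE (S : {set T}) :
  induced_edges e S = #|[set P : {set T} in edges | P \subset S]|.
Proof. by apply: eq_card => P; rewrite !inE -andbA andbC. Qed.

Lemma induced_edges_le (S : {set T}) : induced_edges e S <= 'C(#|S|, 2).
Proof.
rewrite induced_edgesE -cards_draws; apply: subset_leq_card.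
by apply/subsetP => P; rewrite !inE => /andP[/andP[-> _] ->].
Qed.

Lemma sum_induced_edges :
  \sum_(S : {set T} | #|S| == 3) induced_edges e S = (#|T| - 2) * #|edges|.
Proof.
under eq_bigr => S _ do rewrite induced_edgesE.
rewrite sum_card_rel -sum1_card big_distrr /= muln1.
apply: eq_bigr => P; rewrite inE => /andP[/eqP cardP _].
by rewrite -(card_supersets_add1 cardP); apply: eq_card => S; rewrite !inE.
Qed.

Lemma sum_induced_edges_count3 :
  \sum_(S : {set T} | #|S| == 3) induced_edges e S = \sum_(m < 4) m * count3 e m.
Proof.
transitivity (\sum_(S : {set T} | #|S| == 3) \sum_(m < 4) m * (induced_edges e S == m)).
  apply: eq_bigr => S /eqP cardS; have := induced_edges_le S; rewrite cardS.
  by case: (induced_edges e S) => [|[|[|[|]]]] // _; rewrite !big_ord_recr big_ord0.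
rewrite exchange_big; apply: eq_bigr => m _; rewrite -big_distrr -big_mkcondr /=.
by rewrite sum1dep_card.
Qed.

Lemma count3E (m : nat) : 3 <= #|T| ->
  ((count3 e m)%:R = t3 e m * ('C(#|T|, 3))%:R :> rat)%R.
Proof. by move=> n_ge3; rewrite /t3 divfK // pnatr_eq0 -lt0n bin_gt0. Qed.

Hypothesis graph_e : simple_graph e.

Lemma is_edge_set2 (x y : T) : is_edge [set x; y] = e x y.
Proof.
have [sym_e irr_e] := graph_e.
apply/idP/idP => [/existsP[a /existsP[b /andP[/eqP xy_ab eab]]]|exy]; last first.
  by apply/existsP; exists x; apply/existsP; exists y; rewrite eqxx exy.
move: eab; have : a \in [set x; y] by rewrite xy_ab set21.
have : b \in [set x; y] by rewrite xy_ab set22.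
by rewrite !inE => /orP[]/eqP-> /orP[]/eqP-> //; rewrite ?irr_e // sym_e.
Qed.

Lemma triangle_is_clique (S : {set T}) :
  #|S| = 3 -> induced_edges e S = 3 -> is_clique S.
Proof.
move=> cardS triS; have pairsS := cards_draws S 2; rewrite cardS in pairsS.
have edgesS : [set P : {set T} in edges | P \subset S] =
              [set P : {set T} | P \subset S & #|P| == 2].
  apply/eqP; rewrite eqEcard pairsS -induced_edgesE triS leqnn andbT.
  by apply/subsetP => P; rewrite !inE => /andP[/andP[-> _] ->].
apply/forall_inP => x xS; apply/forall_inP => y yS; apply/implyP => xy.
have : [set x; y] \in [set P : {set T} | P \subset S & #|P| == 2].
  by rewrite inE cards2 xy subUset !sub1set xS yS.
by rewrite -edgesS !inE is_edge_set2 => /andP[/andP[_ ->]].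
Qed.

Lemma clique_triangle (S R : {set T}) :
  is_clique S -> R \subset S -> #|R| = 3 -> induced_edges e R = 3.
Proof.
move=> /forall_inP cliqueS RS cardR; rewrite induced_edgesE.
rewrite -[3]/'C(3, 2) -cardR -cards_draws; apply: eq_card => P.
rewrite !inE andbC; have [PR|] //= := boolP (P \subset R).
have [/cards2P[x [y [xy EP]]]|] //= := boolP (#|P| == 2).
move: PR; rewrite EP is_edge_set2 subUset !sub1set => /andP[xR yR].
move/forall_inP: (cliqueS x (subsetP RS x xR)) => /(_ y (subsetP RS y yR)).
by move/implyP; apply.
Qed.

Lemma clique_number_ge3 : 0 < count3 e 3 -> 3 <= clique_number e.
Proof.
rewrite card_gt0 => /set0Pn[S]; rewrite inE => /andP[/eqP cardS /eqP triS].
by rewrite -cardS; apply: leq_bigmax_cond; exact: triangle_is_clique.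
Qed.

Lemma bin_clique_number_le_count3 : 'C(clique_number e, 3) <= count3 e 3.
Proof.
rewrite /clique_number.
have [|S cliqueS ->] := @eq_bigmax_cond _ [pred S | is_clique S] (fun S => #|S|).
  by apply/card_gt0P; exists set0; apply/forall_inP => x; rewrite inE.
rewrite -cards_draws; apply: subset_leq_card; apply/subsetP => R.
rewrite !inE => /andP[RS /eqP cardR].
by rewrite cardR (clique_triangle cliqueS RS cardR) !eqxx.
Qed.

Lemma degree_edges (x : T) :
  degree e x = #|[set P : {set T} in edges | x \in P]|.
Proof.
have [sym_e irr_e] := graph_e.
have -> : [set P : {set T} in edges | x \in P] =
          [set [set x; y] | y in [set y | e x y]].
  apply/setP => P; rewrite inE; apply/idP/imsetP.
    rewrite in_edges andbC => /andP[xP /andP[_ edgeP]].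
    have /existsP[a /existsP[b /andP[/eqP PE eab]]] := edgeP.
    move: xP; rewrite PE !inE => /orP[]/eqP xab; subst; first by exists b; rewrite ?inE.
    by exists a; [rewrite inE sym_e | rewrite setUC].
  case=> y; rewrite inE => exy ->.
  have xy : x != y by apply: contraTneq exy => <-; rewrite irr_e.
  by rewrite inE cards2 xy is_edge_set2 exy set21.
rewrite card_in_imset // => y z; rewrite !inE => exy exz xy_xz.
have : y \in [set x; z] by rewrite -xy_xz set22.
by rewrite !inE => /orP[/eqP yx|/eqP //]; rewrite yx irr_e in exy.
Qed.

Lemma sum_degree : \sum_x degree e x = 2 * #|edges|.
Proof.
under eq_bigr => x _ do rewrite degree_edges.
rewrite sum_card_rel -sum1_card big_distrr /= muln1.
apply: eq_bigr => P; rewrite inE => /andP[/eqP <- _].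
by apply: eq_card => x; rewrite inE.
Qed.

End Graph.

Lemma sum_degree_le (T : finType) (e : rel T) :
  \sum_x degree e x <= #|T| * max_degree e.
Proof.
rewrite -sum1_card big_distrl /=; apply: leq_sum => x _.
by rewrite mul1n; exact: leq_bigmax.
Qed.

Theorem mainTheorem19 (T : finType) (e : rel T) :
  simple_graph e -> #|T| = 16 -> three_symmetric e ->
  (3 <= clique_number e <= 8)%N /\ (8 <= max_degree e)%N.
Proof.
move=> graph_e cardT [n_ge3 [t3_3 [t3_2 [t3_1 t3_0]]]].
have count_of m c (q : rat) : t3 e m = q -> (q * 560 = c%:R)%R -> count3 e m = c.
  move=> tq qc; apply/eqP; rewrite -(eqr_nat rat) count3E // cardT tq -qc.
  by rewrite -[560]/'C(16, 3).
have c3 : count3 e 3 = 70 by apply: count_of t3_3 _; lra.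
have c2 : count3 e 2 = 210 by apply: count_of t3_2 _; lra.
have c1 : count3 e 1 = 210 by apply: count_of t3_1 _; lra.
have c0 : count3 e 0 = 70 by apply: count_of t3_0 _; lra.
have edges60 : #|edges e| = 60.
  have := sum_induced_edges e; rewrite sum_induced_edges_count3 cardT.
  rewrite !big_ord_recr big_ord0 /= c0 c1 c2 c3; lia.
split; [apply/andP; split |].
- by apply: (clique_number_ge3 graph_e); rewrite c3.
- rewrite leqNgt; apply/negP => /(leq_bin2l 3) binomial_big.
  by have := leq_trans binomial_big (bin_clique_number_le_count3 graph_e); rewrite c3.
- have := sum_degree_le e; rewrite sum_degree // edges60 cardT; lia.
Qed.
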